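(* Let $t_1, t_2 \in \mathsf{Topo}$, let $f$ be an embedding of $t_1$ in $t_2$, and let $q \in \mathsf{PIFOTree}(t_1)$. Then $q \preceq \widehat f(q)$.
   Context: Fix a set $\mathsf{Pkt}$ of packets and a totally ordered set $\mathsf{Rk}$ of ranks (a smaller rank is more favorable). PIFOs: for a set $S$, a PIFO over $S$ is a finite sequence of pairs $(s,r) \in S \times \mathsf{Rk}$ kept in insertion order; $\mathsf{PIFO}(S)$ is the set of these. $\mathsf{push}_{\mathsf{PIFO}}(p,s,r)$ appends $(s,r)$ to $p$. $\mathsf{pop}_{\mathsf{PIFO}}(p)$ is undefined if $p$ is empty; otherwise it removes the entry $(s,r)$ of $p$ with minimal rank (earliest-inserted among ties) and returns $(s,p')$ with $p'$ the rest. Topologies: $\mathsf{Topo}$ is the smallest set with $* \in \mathsf{Topo}$ and $\mathsf{Node}(\vec t) \in \mathsf{Topo}$ for every $n \in \mathbb{N}$, $\vec t \in \mathsf{Topo}^n$; $\vec t[i]$ is the $i$-th entry. PIFO trees: $\mathsf{Leaf}(p) \in \mathsf{PIFOTree}( * )$ for $p \in \mathsf{PIFO}(\mathsf{Pkt})$; $\mathsf{Internal}(\vec q, p) \in \mathsf{PIFOTree}(\mathsf{Node}(\vec t))$ whenever $\vec t \in \mathsf{Topo}^n$, $p \in \mathsf{PIFO}(\{1,\dots,n\})$, $\vec q[i] \in \mathsf{PIFOTree}(\vec t[i])$. $\vec q[q'/i]$ is $\vec q$ with $i$-th entry replaced by $q'$. pop (partial): $\mathsf{pop}(\mathsf{Leaf}(p))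 = (pkt,\mathsf{Leaf}(p'))$ if $\mathsf{pop}_{\mathsf{PIFO}}(p)=(pkt,p')$; $\mathsf{pop}(\mathsf{Internal}(\vec q,p)) = (pkt,\mathsf{Internal}(\vec q[q'/i],p'))$ if $\mathsf{pop}_{\mathsf{PIFO}}(p)=(i,p')$ and $\mathsf{pop}(\vec q[i]) = (pkt,q')$; undefined otherwise. Paths: $\mathsf{Path}( * ) = \mathsf{Rk}$; $\mathsf{Path}(\mathsf{Node}(\vec t))$ consists of $(i,r)::pt$ with $1\le i\le n$, $r\in\mathsf{Rk}$, $pt\in\mathsf{Path}(\vec t[i])$. push: $\mathsf{push}(\mathsf{Leaf}(p),pkt,r) = \mathsf{Leaf}(\mathsf{push}_{\mathsf{PIFO}}(p,pkt,r))$; $\mathsf{push}(\mathsf{Internal}(\vec q,p),pkt,(i,r)::pt) = \mathsf{Internal}(\vec q[\mathsf{push}(\vec q[i],pkt,pt)/i],\mathsf{push}_{\mathsf{PIFO}}(p,i,r))$. Simulation: a relation $R \subseteq \mathsf{PIFOTree}(t_1)\times\mathsf{PIFOTree}(t_2)$ is a simulation if for all $pkt$ and $q_1 \mathrel{R} q_2$: (1) if $\mathsf{pop}(q_1)$ is undefined so is $\mathsf{pop}(q_2)$; (2) if $\mathsf{pop}(q_1)=(pkt,q_1')$ then $\mathsf{pop}(q_2)=(pkt,q_2')$ with $q_1' \mathrel{R} q_2'$; (3) for every $pt_1\in\mathsf{Path}(t_1)$ there is $pt_2 \in \mathsf{Path}(t_2)$ with $\mathsf{push}(q_1,pkt,pt_1)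 \mathrel{R} \mathsf{push}(q_2,pkt,pt_2)$. $q_1 \preceq q_2$ means some simulation relates them. Addresses: $\mathsf{Addr}(t) \subseteq \mathbb{N}^*$ is the smallest set with $\epsilon \in \mathsf{Addr}(t)$ and $i\cdot\alpha \in \mathsf{Addr}(\mathsf{Node}(\vec t))$ for $1\le i\le n$, $\alpha \in \mathsf{Addr}(\vec t[i])$. Subtrees: $t/\epsilon = t$, $\mathsf{Node}(\vec t)/(i\cdot\alpha) = \vec t[i]/\alpha$. An embedding of $t_1$ in $t_2$ is an injective $f:\mathsf{Addr}(t_1)\to\mathsf{Addr}(t_2)$ with $f(\epsilon)=\epsilon$, $t_2/f(\alpha) = *$ whenever $t_1/\alpha = *$, and: $\alpha$ is a prefix of $\alpha'$ iff $f(\alpha)$ is a prefix of $f(\alpha')$. If $t_1 = *$ then $t_2 = *$; if $t_1 = \mathsf{Node}(\vec t_1)$ then for each $i$ the map $f_i$ defined by $f(i\cdot\alpha) = f(i)\cdot f_i(\alpha)$ is an embedding of $t_1/i$ in $t_2/f(i)$. Lifting $\widehat f:\mathsf{PIFOTree}(t_1)\to\mathsf{PIFOTree}(t_2)$, by recursion on $t_1$: if $t_1 = *$, $\widehat f(q) = q$. If $t_1 = \mathsf{Node}(\vec t_1)$ with $n$ children and $q = \mathsf{Internal}(\vec q,p)$, define for each address $\alpha$ of $t_2$ that is a prefix of some $f(i)$ a tree $\widehat f(q)_\alpha \in \mathsf{PIFOTree}(t_2/\alpha)$, from longer to shorter $\alpha$: if $\alpha = f(i)$, then $\widehat f(q)_\alpha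 = \widehat{f_i}(\vec q[i])$; otherwise $t_2/\alpha$ is a node with some $m$ children, and $\widehat f(q)_\alpha = \mathsf{Internal}(\vec q_\alpha, p_\alpha)$ where $\vec q_\alpha[j] = \widehat f(q)_{\alpha\cdot j}$ if $\alpha\cdot j$ is a prefix of some $f(i)$, and otherwise $\vec q_\alpha[j]$ is the tree of topology $t_2/(\alpha\cdot j)$ all of whose PIFOs are empty; and $p_\alpha$ is obtained from $p$ by replacing each entry $(i,r)$ with $(j,r)$ where $j$ is such that $\alpha\cdot j$ is a prefix of $f(i)$, deleting entries $(i,r)$ for which no such $j$ exists, and keeping the order of entries. Finally $\widehat f(q) = \widehat f(q)_\epsilon$. *)

From mathcomp Require Import all_boot all_order.
Set Implicit Arguments. Unset Strict Implicit. Unset Printing Implicit Defensive.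
Import Order.TTheory.

(* Conventions: child indices and address components are 0-based
   (paper's index i corresponds to i-1 here). *)

Inductive topo : Type := Star | Node of seq topo.

Section PIFO.
Context {d : Order.disp_t} {Rk : orderType d}.

(** PIFOs over S: finite sequence of (S * Rk) in insertion order. *)
Definition pifo (S : Type) := seq (S * Rk).

Definition pifo_push {S : Type} (p : pifo S) (s : S) (r : Rk) : pifo S :=
  rcons p (s, r).

(** Remove the entry of minimal rank, earliest-inserted among ties. *)
Definition pifo_pop {S : Type} (p : pifo S) : option (S * pifo S) :=
  match p with
  | [::] => None
  | e :: _ =>
      let k := find (fun e => all (fun e' => (e.2 <= e'.2)%O) p) p in
      Some ((nth e p k).1, take k p ++ drop k.+1 p)
  end.

Context {Pkt : Type}.

(** Untyped PIFO trees; [wt t q] says q is in PIFOTree(t). *)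
Inductive ptree : Type :=
  | Leaf of pifo Pkt
  | Internal of seq ptree & pifo nat.

Definition dflt_tree : ptree := Leaf [::].

Fixpoint wt (t : topo) (q : ptree) {struct t} : Prop :=
  match t, q with
  | Star, Leaf _ => True
  | Node ts, Internal qs p =>
      all (fun e => e.1 < size ts) p /\
      (fix go (ts : seq topo) (qs : seq ptree) : Prop :=
         match ts, qs with
         | [::], [::] => True
         | t' :: ts', q' :: qs' => wt t' q' /\ go ts' qs'
         | _, _ => False
         end) ts qs
  | _, _ => False
  end.

Fixpoint pop (q : ptree) : option (Pkt * ptree) :=
  match q with
  | Leaf p =>
      match pifo_pop p with
      | Some (x, p') => Some (x, Leaf p')
      | None => None
      end
  | Internal qs p =>
      match pifo_pop p with
      | Some (i, p') =>
          match nth None (map pop qs) i with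
          | Some (x, q') => Some (x, Internal (set_nth dflt_tree qs i q') p')
          | None => None
          end
      | None => None
      end
  end.

(** Paths: Path(t) is encoded as a pair (pt, r) : seq (nat * Rk) * Rk,
    where (i1,r1)::...::(ik,rk)::r is represented by ([::(i1,r1);...;(ik,rk)], r). *)
Fixpoint vpath (t : topo) (pt : seq (nat * Rk)) {struct pt} : Prop :=
  match pt with
  | [::] => t = Star
  | (i, _) :: pt' =>
      match t with
      | Node ts => i < size ts /\ vpath (nth Star ts i) pt'
      | Star => False
      end
  end.

Fixpoint push (q : ptree) (pkt : Pkt) (pt : seq (nat * Rk)) (r : Rk)
  {struct pt} : ptree :=
  match q, pt with
  | Leaf p, [::] => Leaf (pifo_push p pkt r)
  | Internal qs p, (i, ri) :: pt' =>
      Internal (set_nth dflt_tree qs i (push (nth dflt_tree qs i) pkt pt' r))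
               (pifo_push p i ri)
  | _, _ => q
  end.

Definition is_simulation (t1 t2 : topo) (R : ptree -> ptree -> Prop) : Prop :=
  forall q1 q2, R q1 q2 ->
  [/\ wt t1 q1, wt t2 q2,
      (pop q1 = None -> pop q2 = None),
      (forall pkt q1', pop q1 = Some (pkt, q1') ->
          exists q2', pop q2 = Some (pkt, q2') /\ R q1' q2')
    & (forall pkt (pt1 : seq (nat * Rk)) (r1 : Rk), vpath t1 pt1 ->
          exists (pt2 : seq (nat * Rk)) (r2 : Rk),
            vpath t2 pt2 /\ R (push q1 pkt pt1 r1) (push q2 pkt pt2 r2))].

Definition simulated (t1 t2 : topo) (q1 q2 : ptree) : Prop :=
  exists R, is_simulation t1 t2 R /\ R q1 q2.

End PIFO.

Fixpoint is_addr (t : topo) (a : seq nat) {struct a} : Prop :=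
  match a with
  | [::] => True
  | i :: a' =>
      match t with
      | Node ts => i < size ts /\ is_addr (nth Star ts i) a'
      | Star => False
      end
  end.

Fixpoint subtree (t : topo) (a : seq nat) {struct a} : topo :=
  match a with
  | [::] => t
  | i :: a' =>
      match t with
      | Node ts => subtree (nth Star ts i) a'
      | Star => Star
      end
  end.

(** Embeddings: f is represented as a total function on seq nat whose
    behaviour matters only on Addr(t1). *)
Definition embedding (t1 t2 : topo) (f : seq nat -> seq nat) : Prop :=
  [/\ f [::] = [::],
      (forall a, is_addr t1 a -> is_addr t2 (f a)),
      (forall a b, is_addr t1 a -> is_addr t1 b -> f a = f b -> a = b),
      (forall a, is_addr t1 a -> subtree t1 a = Star -> subtree t2 (f a) = Star)
    & (forall a b, is_addr t1 a -> is_addr t1 b ->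
         prefix a b = prefix (f a) (f b))].

Section Lift.
Context {d : Order.disp_t} {Rk : orderType d} {Pkt : Type}.
Notation ptree := (@ptree d Rk Pkt).

Fixpoint empty_tree (t : topo) : ptree :=
  match t with
  | Star => Leaf [::]
  | Node ts => Internal (map empty_tree ts) [::]
  end.

Definition child_toward (alpha fi : seq nat) : option nat :=
  if prefix alpha fi && (size alpha < size fi) then Some (nth 0 fi (size alpha))
  else None.

(** [build_tree fa L p u alpha]: the tree \hat f(q)_alpha of topology u = t2/alpha,
    where fa = [f(0); ...; f(n-1)], L = lifted children, p = root PIFO of q. *)
Fixpoint build_tree (fa : seq (seq nat)) (L : seq ptree) (p : pifo nat)
    (u : topo) (alpha : seq nat) {struct u} : ptree :=
  if alpha \in fa then nth (Leaf [::]) L (index alpha fa)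
  else match u with
  | Star => Leaf [::]
  | Node us =>
      Internal
        ((fix go (us : seq topo) (j : nat) : seq ptree :=
            match us with
            | [::] => [::]
            | u' :: us' =>
                (if has (prefix (rcons alpha j)) fa
                 then build_tree fa L p u' (rcons alpha j)
                 else empty_tree u') :: go us' j.+1
            end) us 0)
        (pmap (fun e : nat * Rk =>
                 match child_toward alpha (nth [::] fa e.1) with
                 | Some j => Some (j, e.2)
                 | None => None
                 end) p)
  end.

Fixpoint lift_tree (t1 t2 : topo) (f : seq nat -> seq nat) (q : ptree) {struct t1}
  : ptree :=
  match t1, q with
  | Node ts, Internal qs p =>
      let fa := mkseq (fun i => f [:: i]) (size ts) in
      let L :=
        (fix go (ts : seq topo) (qs : seq ptree) (i : nat) : seq ptree :=
           match ts, qs with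
           | t :: ts', q' :: qs' =>
               lift_tree t (subtree t2 (f [:: i]))
                    (fun a => drop (size (f [:: i])) (f (i :: a))) q'
               :: go ts' qs' i.+1
           | _, _ => [::]
           end) ts qs 0 in
      build_tree fa L p t2 [::]
  | _, _ => q
  end.

End Lift.

From mathcomp Require Import all_boot all_order.
Set Implicit Arguments. Unset Strict Implicit. Unset Printing Implicit Defensive.
Import Order.TTheory.

(* The lifting \hat f commutes with pop and push.  At a node alpha of t2 lying
   above some f(i), the PIFO of \hat f(q)_alpha is the root PIFO of q with the
   entries (i, r) routed through alpha relabelled by the child towards f(i), and
   all other entries deleted.  Ranks and relative order are kept, so the entry
   popped there is the image of the entry popped at the root of q, and popping
   \hat f(q) walks down to the lifted child \hat f_i(q_i) that q pops from, the
   other subtrees being untouched.  Dually, a push along (i, r) :: pt is matched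
   by the push that follows the address f(i), ranking every node on the way with
   r, and then follows the path matching pt inside the i-th lifted child.  Since
   lifting also preserves well-formedness, the graph of \hat f restricted to
   well-formed trees is a simulation. *)

Lemma topo_nth_ind (P : topo -> Prop) :
  P Star -> (forall ts, (forall k, k < size ts -> P (nth Star ts k)) -> P (Node ts)) ->
  forall t, P t.
Proof.
move=> PStar PNode; fix IH 1 => -[//|ts]; apply: PNode.
(* Not [by]: [done] would close the empty case with an ill-guarded call to [IH]. *)
move: ts; fix IHs 1 => -[|t ts] k; first (rewrite ltn0 => /notF []).
by case: k => [_|k lt_k] /=; [exact: IH | exact: IHs].
Qed.

Section Prefix.
Variable T : eqType.
Implicit Types (a x : seq T).

Lemma prefix_cat_drop a x : prefix a x -> x = a ++ drop (size a) x.
Proof. by case/prefixP=> y ->; rewrite drop_size_cat. Qed.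

Lemma prefix_rconsE (x0 : T) a x j :
  prefix (rcons a j) x = [&& prefix a x, size a < size x & nth x0 x (size a) == j].
Proof.
elim: a x => [|i a IH] [|y x] //=; first by rewrite prefix0s andbT eq_sym.
by rewrite IH; case: (i == y).
Qed.

Lemma prefix_rcons_drop a x j :
  prefix (rcons a j) x -> drop (size a) x = j :: drop (size a).+1 x.
Proof.
by rewrite (prefix_rconsE j) => /and3P [_ lt_ax /eqP eq_j]; rewrite (drop_nth j lt_ax) eq_j.
Qed.

Lemma prefix_rcons_nth (x0 : T) a x :
  prefix a x -> a != x -> prefix (rcons a (nth x0 x (size a))) x.
Proof.
move=> ax neq_ax; rewrite (prefix_rconsE x0) ax eqxx andbT ltn_neqAle size_prefix // andbT.
by apply: contra neq_ax => /eqP eq_size; move: ax; rewrite prefixE eq_size take_size eq_sym.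
Qed.

Lemma prefix_rcons_inj (x0 : T) a x j k :
  prefix (rcons a j) x -> prefix (rcons a k) x -> j = k.
Proof. by rewrite !(prefix_rconsE x0) => /and3P [_ _ /eqP <-] /and3P [_ _ /eqP]. Qed.

End Prefix.

Lemma pmap_filter_dom (S T : Type) (P : pred S) (g : S -> option T) s :
  (forall x, ~~ P x -> g x = None) -> pmap g (filter P s) = pmap g s.
Proof.
move=> gP; elim: s => //= x s IH.
by case: ifPn => Px /=; rewrite IH // gP.
Qed.

Lemma filter_subpred (T : Type) (a1 a2 : pred T) s :
  subpred a1 a2 -> filter a1 (filter a2 s) = filter a1 s.
Proof.
move=> sub_a; rewrite -filter_predI; apply: eq_filter => x /=.
by case: (boolP (a1 x)) => //= /sub_a ->.
Qed.

Section Pifo.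
Context {d : Order.disp_t} {Rk : orderType d} {S : Type}.
Implicit Types (pre post p : seq (S * Rk)) (e : S * Rk).

Definition first_min pre e post :=
  all (fun x => e.2 < x.2)%O pre && all (fun x => e.2 <= x.2)%O post.

Lemma pifo_pop_first_min pre e post :
  first_min pre e post -> pifo_pop (pre ++ e :: post) = Some (e.1, pre ++ post).
Proof.
case/andP=> lt_pre le_post; set p := pre ++ e :: post.
have is_min (x : S * Rk) :
    all (fun y => (x.2 <= y.2)%O) p = (x.2 <= e.2)%O && all (fun y => (x.2 <= y.2)%O) p.
  by rewrite /p !all_cat /=; case: (x.2 <= e.2)%O; rewrite /= ?andbF.
have find_e : find (fun x => all (fun y => (x.2 <= y.2)%O) p) p = size pre.
  rewrite find_cat /= is_min lexx /p all_cat /= lexx le_post andbT.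
  have -> : has (fun x => all (fun y => (x.2 <= y.2)%O) p) pre = false.
    apply/negbTE; rewrite -all_predC; apply: sub_all lt_pre => x /= lt_ex.
    by rewrite is_min lt_geF.
  by rewrite (sub_all _ lt_pre) ?addn0 // => x /ltW.
rewrite /pifo_pop; case Ep: p => [|x s].
  by move/(congr1 size): Ep; rewrite size_cat addnS.
rewrite -Ep find_e /p nth_cat ltnn subnn take_size_cat //.
by rewrite drop_cat ltnNge leqnSn /= subSn // subnn /= drop0.
Qed.

Lemma first_min_exists x p :
  exists pre e post, x :: p = pre ++ e :: post /\ first_min pre e post.
Proof.
elim: p x => [|y p IH] x; first by exists [::], x, [::].
have [pre [e [post [-> /andP [lt_pre le_post]]]]] := IH y.
case: (leP x.2 e.2) => [le_xe | lt_ex].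
  exists [::], x, (pre ++ e :: post); split => //.
  rewrite /first_min all_cat /= le_xe (sub_all _ lt_pre) ?(sub_all _ le_post) //.
    by move=> z; apply: le_trans.
  by move=> z /ltW; apply: le_trans.
by exists (x :: pre), e, post; rewrite /first_min /= lt_ex lt_pre.
Qed.

Lemma pifo_popP p s p' :
  pifo_pop p = Some (s, p') ->
  exists pre e post,
    [/\ p = pre ++ e :: post, first_min pre e post, s = e.1 & p' = pre ++ post].
Proof.
case: p => [//|x p] pop_p.
have [pre [e [post [Ep min_e]]]] := first_min_exists x p.
move: pop_p; rewrite Ep pifo_pop_first_min // => -[<- <-].
by exists pre, e, post.
Qed.

Lemma pifo_pop_None p : pifo_pop p = None -> p = [::].
Proof. by case: p. Qed.

Lemma pifo_pop_all (P : pred S) p s p' :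
  pifo_pop p = Some (s, p') -> all (P \o fst) p -> P s && all (P \o fst) p'.
Proof.
case/pifo_popP=> pre [e [post [-> _ -> ->]]].
by rewrite !all_cat /= andbCA.
Qed.

End Pifo.

Lemma pifo_pop_pmap {d : Order.disp_t} {Rk : orderType d} (S T : Type)
    (g : S * Rk -> option (T * Rk)) (pre post : seq (S * Rk)) e (e' : T * Rk) :
  (forall x y, g x = Some y -> y.2 = x.2) -> g e = Some e' -> first_min pre e post ->
  pifo_pop (pmap g (pre ++ e :: post)) = Some (e'.1, pmap g (pre ++ post)).
Proof.
move=> g_rank g_e /andP [lt_pre le_post]; rewrite !pmap_cat /= g_e.
apply: pifo_pop_first_min; rewrite /first_min !all_pmap (g_rank _ _ g_e).
apply/andP; split; [apply: sub_all lt_pre | apply: sub_all le_post];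
  by move=> x /=; case g_x: (g x) => [y|] //=; rewrite (g_rank _ _ g_x).
Qed.

Section Typing.
Context {d : Order.disp_t} {Rk : orderType d} {Pkt : Type}.
Notation ptree := (@ptree d Rk Pkt).

Fixpoint wts (ts : seq topo) (qs : seq ptree) : Prop :=
  match ts, qs with
  | [::], [::] => True
  | t :: ts', q :: qs' => wt t q /\ wts ts' qs'
  | _, _ => False
  end.

Lemma wt_Internal ts qs (p : pifo nat) :
  wt (Node ts) (Internal qs p) = (all (fun e => e.1 < size ts) p /\ wts ts qs).
Proof. by []. Qed.

Lemma wtsP ts qs :
  wts ts qs <->
  size ts = size qs /\ forall k, k < size ts -> wt (nth Star ts k) (nth dflt_tree qs k).
Proof.
elim: ts qs => [|t ts IH] [|q qs] /=; try by split=> // -[].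
split=> [[wt_q /IH [eq_size wt_qs]] | [[eq_size] wt_qs]].
  by split=> [|[|k] //=]; [rewrite eq_size | apply: wt_qs].
by split; [apply: (wt_qs 0) | apply/IH; split=> // k; apply: (wt_qs k.+1)].
Qed.

Lemma wts_set_nth ts qs i q :
  wts ts qs -> i < size ts -> wt (nth Star ts i) q -> wts ts (set_nth dflt_tree qs i q).
Proof.
case/wtsP=> eq_size wt_qs lt_i wt_q; apply/wtsP.
rewrite size_set_nth -eq_size (maxn_idPr lt_i); split=> // k lt_k.
by rewrite nth_set_nth /=; case: eqP => [-> | _]; [apply: wt_q | apply: wt_qs].
Qed.

Lemma wt_empty_tree t : wt t (empty_tree t : ptree).
Proof.
elim/topo_nth_ind: t => [//|ts IH] /=; split=> //.
apply/wtsP; rewrite size_map; split=> // k lt_k.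
by rewrite (nth_map Star) //; apply: IH.
Qed.

Lemma pop_Internal (qs : seq ptree) p i p' :
  pifo_pop p = Some (i, p') -> i < size qs ->
  pop (Internal qs p) =
  omap (fun xq => (xq.1, Internal (set_nth dflt_tree qs i xq.2) p'))
       (pop (nth dflt_tree qs i)).
Proof. by move=> /= -> lt_i; rewrite (nth_map dflt_tree) //; case: pop => [[]|]. Qed.

Lemma push_Internal (qs : seq ptree) p pkt i ri pt r :
  push (Internal qs p) pkt ((i, ri) :: pt) r =
  Internal (set_nth dflt_tree qs i (push (nth dflt_tree qs i) pkt pt r)) (rcons p (i, ri)).
Proof. by []. Qed.

Lemma wt_pop t (q : ptree) x q' : wt t q -> pop q = Some (x, q') -> wt t q'.
Proof.
elim/topo_nth_ind: t q x q' => [|ts IH] [p|qs p] x q' //.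
  by rewrite /=; case: pifo_pop => [[? ?]|] // _ [_ <-].
rewrite wt_Internal => -[wt_p wt_qs].
case pop_p: (pifo_pop p) => [[i p']|]; last by rewrite /= pop_p.
have /andP [lt_i wt_p'] := pifo_pop_all (P := fun j => j < size ts) pop_p wt_p.
have /wtsP [eq_size wt_q] := wt_qs.
rewrite (pop_Internal pop_p) -?eq_size //.
case pop_qi: (pop _) => [[y qi']|] //= [_ <-]; split=> //.
by apply: wts_set_nth => //; apply: IH (wt_q i lt_i) pop_qi.
Qed.

Lemma wt_push t (q : ptree) pkt pt r : wt t q -> vpath t pt -> wt t (push q pkt pt r).
Proof.
elim/topo_nth_ind: t q pt => [|ts IH] [p|qs p] [|[i ri] pt] //= [wt_p wt_qs] [lt_i v_pt].
split; first by rewrite /pifo_push -cats1 all_cat wt_p /= lt_i.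
apply: wts_set_nth => //; apply: IH => //.
by case/wtsP: wt_qs => _; apply.
Qed.

End Typing.

Lemma is_addr_cat t a b :
  is_addr t (a ++ b) <-> is_addr t a /\ is_addr (subtree t a) b.
Proof.
elim: a t => [|i a IH] [|ts] /=; try by split=> // -[].
by have := IH (nth Star ts i); tauto.
Qed.

Lemma subtree_cat t a b : subtree t (a ++ b) = subtree (subtree t a) b.
Proof. by elim: a t => [|i a IH] [|ts] //=; case: a b {IH} => [|? ?] [|? ?]. Qed.

Lemma vpath_const_cat {d : Order.disp_t} {Rk : orderType d} t a (r : Rk) pt :
  is_addr t a -> vpath (subtree t a) pt -> vpath t ([seq (c, r) | c <- a] ++ pt).
Proof. by elim: a t => [|c a IH] [|ts] //= [lt_c a_c] /(IH _ a_c). Qed.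

Definition child_emb (f : seq nat -> seq nat) (i : nat) (a : seq nat) : seq nat :=
  drop (size (f [:: i])) (f (i :: a)).

Definition child_addrs (f : seq nat -> seq nat) (n : nat) : seq (seq nat) :=
  mkseq (fun i => f [:: i]) n.

Lemma size_child_addrs f n : size (child_addrs f n) = n.
Proof. exact: size_mkseq. Qed.

Lemma nth_child_addrs f n k : k < n -> nth [::] (child_addrs f n) k = f [:: k].
Proof. exact: nth_mkseq. Qed.

Section ChildEmbedding.
Variables (ts : seq topo) (t2 : topo) (f : seq nat -> seq nat).
Hypothesis emb_f : embedding (Node ts) t2 f.

Lemma child_addrs_minimal i :
  i < size ts -> forall k, k < size (child_addrs f (size ts)) ->
  prefix (nth [::] (child_addrs f (size ts)) k) (nth [::] (child_addrs f (size ts)) i) -> k = i.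
Proof.
case: emb_f => _ _ _ _ pre_f lt_i k; rewrite size_child_addrs => lt_k.
by rewrite !nth_child_addrs // -pre_f //= => /andP [/eqP].
Qed.

Lemma nil_notin_child_addrs : [::] \notin child_addrs f (size ts).
Proof.
case: emb_f => f_nil _ inj_f _ _; apply/negP => /(nthP [::]) [k].
rewrite size_child_addrs => lt_k; rewrite nth_child_addrs // => fk_nil.
by have := inj_f [:: k] [::] (conj lt_k I) I; rewrite fk_nil f_nil => /(_ erefl).
Qed.

Lemma embedding_child_addr k : k < size ts -> is_addr t2 (f [:: k]).
Proof. by case: emb_f => _ addr_f _ _ _ lt_k; apply: addr_f. Qed.

Lemma embedding_child i :
  i < size ts -> embedding (nth Star ts i) (subtree t2 (f [:: i])) (child_emb f i).
Proof.
case: emb_f => f_nil addr_f inj_f leaf_f pre_f lt_i.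
have f_cat a : is_addr (nth Star ts i) a -> f (i :: a) = f [:: i] ++ child_emb f i a.
  by move=> a_i; apply: prefix_cat_drop; rewrite -pre_f //= eqxx prefix0s.
split.
- by rewrite /child_emb drop_size.
- move=> a a_i; have := addr_f (i :: a) (conj lt_i a_i).
  by rewrite (f_cat a a_i) => /is_addr_cat [].
- move=> a b a_i b_i eq_ab.
  have : f (i :: a) = f (i :: b) by rewrite (f_cat a) // (f_cat b) // eq_ab.
  by move/(inj_f (i :: a) (i :: b) (conj lt_i a_i) (conj lt_i b_i)) => [].
- by move=> a a_i leaf_a; rewrite -subtree_cat -f_cat //; apply: leaf_f.
- move=> a b a_i b_i; move: (pre_f (i :: a) (i :: b) (conj lt_i a_i) (conj lt_i b_i)).
  by rewrite prefix_cons eqxx (f_cat a) // (f_cat b) // prefix_catr // eqxx.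
Qed.

End ChildEmbedding.

Lemma embedding_Star t2 f : embedding Star t2 f -> t2 = Star.
Proof. by case=> f_nil _ _ leaf_f _; have := leaf_f [::] I erefl; rewrite f_nil. Qed.

Lemma addr_path_ind (x : seq nat) (P : topo -> seq nat -> Prop) :
  (forall u, P u x) ->
  (forall us alpha j, prefix (rcons alpha j) x -> j < size us ->
     P (nth Star us j) (rcons alpha j) -> P (Node us) alpha) ->
  forall u alpha, prefix alpha x -> is_addr u (drop (size alpha) x) -> P u alpha.
Proof.
move=> P_x P_step; elim/topo_nth_ind => [|us IH] alpha alpha_x;
  (case: (eqVneq alpha x) => [-> _|neq_x]; first exact: P_x);
  have alpha_j := prefix_rcons_nth 0 alpha_x neq_x;
  rewrite (prefix_rcons_drop alpha_j) //= => -[lt_j addr].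
by apply: P_step alpha_j lt_j (IH _ lt_j _ alpha_j _); rewrite size_rcons.
Qed.

Section BuildTree.
Context {d : Order.disp_t} {Rk : orderType d} {Pkt : Type}.
Notation ptree := (@ptree d Rk Pkt).

Definition build_children (F : topo -> nat -> ptree) :=
  fix go (us : seq topo) (j : nat) : seq ptree :=
    if us is u :: us' then F u j :: go us' j.+1 else [::].

Lemma size_build_children F us : size (build_children F us 0) = size us.
Proof. by elim: us 0 => //= u us IH j; rewrite IH. Qed.

Lemma nth_build_children F us k :
  k < size us -> nth dflt_tree (build_children F us 0) k = F (nth Star us k) k.
Proof.
suff nth_from j : k < size us ->
    nth dflt_tree (build_children F us j) k = F (nth Star us k) (j + k) by apply: nth_from.
elim: us j k => [|u us IH] j [|k] //=; first by rewrite addn0.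
by move=> lt_k; rewrite IH // addnS.
Qed.

Lemma build_children_update F F' us j X :
  j < size us -> X = F' (nth Star us j) j ->
  (forall k, k < size us -> k != j -> F (nth Star us k) k = F' (nth Star us k) k) ->
  set_nth dflt_tree (build_children F us 0) j X = build_children F' us 0.
Proof.
move=> lt_j -> eq_F; apply: (@eq_from_nth _ dflt_tree).
  by rewrite size_set_nth !size_build_children; apply/maxn_idPr.
rewrite size_set_nth size_build_children (maxn_idPr lt_j) => k lt_k.
rewrite nth_set_nth /= !nth_build_children //.
by case: eqP => [-> | /eqP neq_kj]; last rewrite eq_F.
Qed.

Variable fa : seq (seq nat).
Implicit Types (L : seq ptree) (p : @pifo d Rk nat).

Definition route (alpha : seq nat) (e : nat * Rk) : option (nat * Rk) :=
  omap (fun j => (j, e.2)) (child_toward alpha (nth [::] fa e.1)).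

Lemma route_rank alpha e y : route alpha e = Some y -> y.2 = e.2.
Proof. by rewrite /route; case: child_toward => // j [<-]. Qed.

Lemma route_prefix alpha e y :
  route alpha e = Some y -> prefix (rcons alpha y.1) (nth [::] fa e.1).
Proof.
rewrite /route /child_toward; case: ifP => // /andP [alpha_e lt_alpha] [<-] /=.
by rewrite (prefix_rconsE 0) alpha_e lt_alpha eqxx.
Qed.

Lemma route_rcons alpha j e :
  prefix (rcons alpha j) (nth [::] fa e.1) -> route alpha e = Some (j, e.2).
Proof. by rewrite (prefix_rconsE 0) /route /child_toward => /and3P [-> -> /eqP ->]. Qed.

Lemma build_treeE L p u alpha :
  build_tree fa L p u alpha =
  if alpha \in fa then nth dflt_tree L (index alpha fa)
  else if u is Node us then
    Internal
      (build_children (fun u' j => if has (prefix (rcons alpha j)) fa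
                                   then build_tree fa L p u' (rcons alpha j)
                                   else empty_tree u') us 0)
      (pmap (route alpha) p)
  else Leaf [::].
Proof. by case: u. Qed.

Lemma build_tree_local L L' p p' u beta :
  (forall k, prefix beta (nth [::] fa k) -> nth dflt_tree L k = nth dflt_tree L' k) ->
  [seq e <- p | prefix beta (nth [::] fa e.1)] =
    [seq e <- p' | prefix beta (nth [::] fa e.1)] ->
  build_tree fa L p u beta = build_tree fa L' p' u beta.
Proof.
elim/topo_nth_ind: u beta => [|us IH] beta eq_L eq_p; rewrite !build_treeE;
  (case: ifP => beta_fa; first by rewrite eq_L ?nth_index ?prefix_refl) => //.
have route_out e : ~~ prefix beta (nth [::] fa e.1) -> route beta e = None.
  move=> out_e; case r_e: (route beta e) => [y|] //.
  by move: out_e (route_prefix r_e); rewrite (prefix_rconsE 0) => /negbTE ->.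
rewrite -(pmap_filter_dom p route_out) eq_p pmap_filter_dom //; congr Internal.
apply: (@eq_from_nth _ dflt_tree); rewrite !size_build_children // => k lt_k.
rewrite !nth_build_children //; case: ifP => // _; apply: IH => //.
  by move=> m /(prefix_trans (prefix_rcons beta k)); apply: eq_L.
have sub_below : subpred (fun e : nat * Rk => prefix (rcons beta k) (nth [::] fa e.1))
                         (fun e => prefix beta (nth [::] fa e.1)).
  by move=> e; apply: prefix_trans (prefix_rcons beta k).
by rewrite -(filter_subpred p sub_below) eq_p filter_subpred.
Qed.

Lemma build_tree_off L p p' i l u beta :
  ~~ prefix beta (nth [::] fa i) ->
  [seq e <- p | e.1 != i] = [seq e <- p' | e.1 != i] ->
  build_tree fa L p u beta = build_tree fa (set_nth dflt_tree L i l) p' u beta.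
Proof.
move=> out_i eq_p; apply: build_tree_local.
  move=> k below_k; rewrite nth_set_nth /=.
  by case: eqP => // eq_ki; rewrite -eq_ki below_k in out_i.
have sub_below : subpred (fun e : nat * Rk => prefix beta (nth [::] fa e.1)) (fun e => e.1 != i).
  by move=> e; apply: contraTneq => ->.
by rewrite -(filter_subpred p sub_below) eq_p filter_subpred.
Qed.

Definition wt_below L u alpha :=
  forall k, k < size fa -> prefix alpha (nth [::] fa k) ->
    is_addr u (drop (size alpha) (nth [::] fa k)) /\
    wt (subtree u (drop (size alpha) (nth [::] fa k))) (nth dflt_tree L k).

Lemma build_tree_wt L p u alpha : wt_below L u alpha -> wt u (build_tree fa L p u alpha).
Proof.
have wt_at v beta : beta \in fa -> wt_below L v beta -> wt v (nth dflt_tree L (index beta fa)).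
  move=> beta_fa /(_ (index beta fa)).
  by rewrite index_mem beta_fa nth_index // drop_size => /(_ isT (prefix_refl _)) [].
elim/topo_nth_ind: u alpha => [|us IH] alpha wt_L; rewrite build_treeE;
  case: ifP => alpha_fa; [exact: wt_at | by [] | exact: wt_at |].
rewrite wt_Internal; split.
  rewrite all_pmap; apply/allP => e _ /=; case r_e: (route alpha e) => [y|] //=.
  have below_e := route_prefix r_e.
  have lt_e : e.1 < size fa.
    rewrite ltnNge; apply/negP => /(nth_default [::]) fa_e.
    by move: below_e; rewrite fa_e (prefix_rconsE 0) ltn0 andbF.
  have [] := wt_L _ lt_e (prefix_trans (prefix_rcons _ _) below_e).
  by rewrite (prefix_rcons_drop below_e) => -[].
apply/wtsP; rewrite size_build_children; split=> // k lt_k.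
rewrite nth_build_children //; case: ifP => _; last exact: wt_empty_tree.
apply: IH => // m lt_m below_m.
have [] := wt_L m lt_m (prefix_trans (prefix_rcons _ _) below_m).
by rewrite (prefix_rcons_drop below_m) size_rcons => -[].
Qed.

Lemma build_tree_nil_pop L u alpha :
  alpha \notin fa -> pop (build_tree fa L [::] u alpha) = None.
Proof. by move=> alpha_fa; rewrite build_treeE (negbTE alpha_fa); case: u. Qed.

Variable i : nat.
Hypothesis lt_i : i < size fa.
Hypothesis fa_i_minimal :
  forall k, k < size fa -> prefix (nth [::] fa k) (nth [::] fa i) -> k = i.

Lemma index_fa_i : index (nth [::] fa i) fa = i.
Proof.
have fa_i : nth [::] fa i \in fa := mem_nth [::] lt_i.
by apply: fa_i_minimal; rewrite ?index_mem ?nth_index ?prefix_refl.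
Qed.

Lemma has_prefix_fa_i beta : prefix beta (nth [::] fa i) -> has (prefix beta) fa.
Proof. by move=> beta_i; apply/hasP; exists (nth [::] fa i); rewrite ?mem_nth. Qed.

Lemma build_tree_at L p u : build_tree fa L p u (nth [::] fa i) = nth dflt_tree L i.
Proof. by rewrite build_treeE mem_nth // index_fa_i. Qed.

Lemma prefix_fa_i_notin alpha j : prefix (rcons alpha j) (nth [::] fa i) -> alpha \notin fa.
Proof.
move=> alpha_j; apply/negP => alpha_fa.
have alpha_i : prefix alpha (nth [::] fa i) := prefix_trans (prefix_rcons _ _) alpha_j.
have eq_i : index alpha fa = i by apply: fa_i_minimal; rewrite ?index_mem ?nth_index.
by move: (size_prefix alpha_j); rewrite -eq_i nth_index // size_rcons ltnn.
Qed.

Lemma build_tree_pop L p p' u alpha :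
  pifo_pop p = Some (i, p') ->
  prefix alpha (nth [::] fa i) -> is_addr u (drop (size alpha) (nth [::] fa i)) ->
  pop (build_tree fa L p u alpha) =
  omap (fun xl => (xl.1, build_tree fa (set_nth dflt_tree L i xl.2) p' u alpha))
       (pop (nth dflt_tree L i)).
Proof.
move=> pop_p; have [pre [e [post [-> min_e e_i ->]]]] := pifo_popP pop_p.
move: u alpha; apply: addr_path_ind => [u | us alpha j alpha_j lt_j IH].
  rewrite build_tree_at; case: pop => [[x l]|] //=.
  by rewrite build_tree_at nth_set_nth /= eqxx.
have alpha_fa := prefix_fa_i_notin alpha_j.
have route_e : route alpha e = Some (j, e.2) by apply: route_rcons; rewrite -e_i.
have has_j := has_prefix_fa_i alpha_j.
rewrite build_treeE (negbTE alpha_fa).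
rewrite (pop_Internal (pifo_pop_pmap (@route_rank _) route_e min_e)) ?size_build_children //.
rewrite nth_build_children // has_j IH.
case: pop => [[x l]|] //; cbn [omap obind oapp fst snd].
rewrite [in RHS]build_treeE (negbTE alpha_fa); congr (Some (x, Internal _ _)).
apply: build_children_update; rewrite ?has_j //.
move=> k lt_k neq_kj; case: ifP => // _; apply: build_tree_off.
  by apply/negP => /(prefix_rcons_inj 0 alpha_j) eq_jk; rewrite eq_jk eqxx in neq_kj.
by rewrite !filter_cat /= -e_i eqxx.
Qed.

Lemma build_tree_push L p (r : Rk) pkt pt r0 u alpha :
  prefix alpha (nth [::] fa i) -> is_addr u (drop (size alpha) (nth [::] fa i)) ->
  push (build_tree fa L p u alpha) pkt
       ([seq (c, r) | c <- drop (size alpha) (nth [::] fa i)] ++ pt) r0 =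
  build_tree fa (set_nth dflt_tree L i (push (nth dflt_tree L i) pkt pt r0))
             (rcons p (i, r)) u alpha.
Proof.
move: u alpha; apply: addr_path_ind => [u | us alpha j alpha_j lt_j IH].
  by rewrite drop_size /= !build_tree_at nth_set_nth /= eqxx.
have alpha_fa := prefix_fa_i_notin alpha_j.
have has_j := has_prefix_fa_i alpha_j.
rewrite (prefix_rcons_drop alpha_j) build_treeE (negbTE alpha_fa) map_cons cat_cons.
rewrite push_Internal.
rewrite nth_build_children // has_j; move: IH; rewrite size_rcons => ->.
rewrite [in RHS]build_treeE (negbTE alpha_fa) -cats1 pmap_cat.
rewrite /= (route_rcons (e := (i, r)) alpha_j) /=; congr Internal; last by rewrite cats1.
apply: build_children_update; rewrite ?has_j //.
move=> k lt_k neq_kj; case: ifP => // _; apply: build_tree_off.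
  by apply/negP => /(prefix_rcons_inj 0 alpha_j) eq_jk; rewrite eq_jk eqxx in neq_kj.
by rewrite filter_cat /= eqxx cats0.
Qed.

End BuildTree.

Section Lift.
Context {d : Order.disp_t} {Rk : orderType d} {Pkt : Type}.
Notation ptree := (@ptree d Rk Pkt).

Definition lift_children (t2 : topo) (f : seq nat -> seq nat) :=
  fix go (ts : seq topo) (qs : seq ptree) (i : nat) : seq ptree :=
    match ts, qs with
    | t :: ts', q :: qs' =>
        lift_tree t (subtree t2 (f [:: i])) (child_emb f i) q :: go ts' qs' i.+1
    | _, _ => [::]
    end.

Lemma lift_Internal t2 f ts qs (p : pifo nat) :
  lift_tree (Node ts) t2 f (Internal qs p) =
  build_tree (child_addrs f (size ts)) (lift_children t2 f ts qs 0) p t2 [::].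
Proof. by []. Qed.

Lemma size_lift_children t2 f ts qs :
  size (lift_children t2 f ts qs 0) = minn (size ts) (size qs).
Proof. by elim: ts qs 0 => [|t ts IH] [|q qs] j //=; rewrite IH minnSS. Qed.

Lemma nth_lift_children t2 f ts qs k :
  k < size ts -> k < size qs ->
  nth dflt_tree (lift_children t2 f ts qs 0) k =
  lift_tree (nth Star ts k) (subtree t2 (f [:: k])) (child_emb f k) (nth dflt_tree qs k).
Proof.
suff nth_from j : k < size ts -> k < size qs ->
    nth dflt_tree (lift_children t2 f ts qs j) k =
    lift_tree (nth Star ts k) (subtree t2 (f [:: j + k])) (child_emb f (j + k))
              (nth dflt_tree qs k) by apply: nth_from.
elim: ts qs j k => [|t ts IH] [|q qs] j [|k] //=; first by rewrite addn0.
by move=> lt_kt lt_kq; rewrite IH // addnS.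
Qed.

Lemma lift_children_set_nth t2 f ts qs i q :
  i < size ts -> size ts = size qs ->
  lift_children t2 f ts (set_nth dflt_tree qs i q) 0 =
  set_nth dflt_tree (lift_children t2 f ts qs 0) i
          (lift_tree (nth Star ts i) (subtree t2 (f [:: i])) (child_emb f i) q).
Proof.
move=> lt_i eq_size; have size_set : size (set_nth dflt_tree qs i q) = size ts.
  by rewrite size_set_nth -eq_size (maxn_idPr lt_i).
apply: (@eq_from_nth _ dflt_tree).
  by rewrite size_set_nth !size_lift_children size_set -eq_size !minnn (maxn_idPr lt_i).
rewrite size_lift_children size_set minnn => k lt_k.
rewrite nth_lift_children ?size_set // !nth_set_nth /=.
by case: eqP => [-> | _] //; rewrite nth_lift_children -?eq_size.
Qed.

Lemma lift_tree_wt t1 t2 f (q : ptree) :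
  embedding t1 t2 f -> wt t1 q -> wt t2 (lift_tree t1 t2 f q).
Proof.
elim/topo_nth_ind: t1 t2 f q => [|ts IH] t2 f [p|qs p] emb //.
  by rewrite (embedding_Star emb).
rewrite wt_Internal lift_Internal => -[_ /wtsP [eq_size wt_qs]].
apply: build_tree_wt => k; rewrite size_child_addrs => lt_k _.
rewrite drop0 nth_child_addrs // nth_lift_children -?eq_size //.
split; first exact: (embedding_child_addr emb lt_k).
exact: IH (embedding_child emb lt_k) (wt_qs k lt_k).
Qed.

Lemma lift_tree_pop t1 t2 f (q : ptree) :
  embedding t1 t2 f -> wt t1 q ->
  pop (lift_tree t1 t2 f q) = omap (fun xq => (xq.1, lift_tree t1 t2 f xq.2)) (pop q).
Proof.
elim/topo_nth_ind: t1 t2 f q => [|ts IH] t2 f [p|qs p] emb //.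
  by rewrite /=; case: pifo_pop => [[]|].
rewrite wt_Internal lift_Internal => -[wt_p /wtsP [eq_size wt_qs]].
case pop_p: (pifo_pop p) => [[i p']|]; last first.
  by rewrite (pifo_pop_None pop_p) build_tree_nil_pop // (nil_notin_child_addrs emb).
have /andP [lt_i _] := pifo_pop_all (P := fun j => j < size ts) pop_p wt_p.
have lt_i' : i < size (child_addrs f (size ts)) by rewrite size_child_addrs.
have addr_i : is_addr t2 (drop 0 (nth [::] (child_addrs f (size ts)) i)).
  by rewrite drop0 nth_child_addrs //; apply: (embedding_child_addr emb lt_i).
rewrite (build_tree_pop lt_i' (child_addrs_minimal emb lt_i) _ pop_p (prefix0s _) addr_i).
rewrite (pop_Internal pop_p) -?eq_size // nth_lift_children -?eq_size //.
rewrite (IH i lt_i _ _ _ (embedding_child emb lt_i) (wt_qs i lt_i)).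
case: pop => [[x q']|] //; cbn [omap obind oapp fst snd].
by rewrite lift_Internal lift_children_set_nth.
Qed.

Lemma lift_tree_push t1 t2 f (q : ptree) pkt pt r :
  embedding t1 t2 f -> wt t1 q -> vpath t1 pt ->
  exists2 pt2, vpath t2 pt2 &
    push (lift_tree t1 t2 f q) pkt pt2 r = lift_tree t1 t2 f (push q pkt pt r).
Proof.
elim/topo_nth_ind: t1 t2 f q pt => [|ts IH] t2 f [p|qs p] [|[i ri] pt] emb //.
  by rewrite (embedding_Star emb); exists [::].
rewrite wt_Internal => -[_ /wtsP [eq_size wt_qs]] [lt_i v_pt].
have [pt2 v_pt2 push_lift] := IH i lt_i _ _ _ _ (embedding_child emb lt_i) (wt_qs i lt_i) v_pt.
have lt_i' : i < size (child_addrs f (size ts)) by rewrite size_child_addrs.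
have addr_i : is_addr t2 (drop 0 (nth [::] (child_addrs f (size ts)) i)).
  by rewrite drop0 nth_child_addrs //; apply: (embedding_child_addr emb lt_i).
exists ([seq (c, ri) | c <- drop 0 (nth [::] (child_addrs f (size ts)) i)] ++ pt2).
  rewrite drop0 nth_child_addrs //.
  by apply: vpath_const_cat _ v_pt2; apply: (embedding_child_addr emb lt_i).
rewrite push_Internal !lift_Internal.
rewrite (build_tree_push lt_i' (child_addrs_minimal emb lt_i) _ _ _ _ _ _ (prefix0s _) addr_i).
by rewrite nth_lift_children -?eq_size // push_lift lift_children_set_nth.
Qed.

End Lift.

Theorem theorem5p11 (d : Order.disp_t) (Rk : orderType d) (Pkt : Type)
  (t1 t2 : topo) (f : seq nat -> seq nat) (q : @ptree d Rk Pkt) :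
  embedding t1 t2 f -> wt t1 q -> simulated t1 t2 q (lift_tree t1 t2 f q).
Proof.
move=> emb wt_q.
exists (fun q1 q2 => wt t1 q1 /\ q2 = lift_tree t1 t2 f q1); split=> // q1 _ [wt_q1 ->].
have lift_pop := lift_tree_pop emb wt_q1.
split=> //.
- exact: lift_tree_wt.
- by rewrite lift_pop => ->.
- move=> pkt q1' pop_q1; exists (lift_tree t1 t2 f q1'); rewrite lift_pop pop_q1.
  by split=> //; split=> //; apply: wt_pop pop_q1.
- move=> pkt pt1 r1 v_pt1.
  have [pt2 v_pt2 push_lift] := lift_tree_push pkt r1 emb wt_q1 v_pt1.
  by exists pt2, r1; split=> //; split; [apply: wt_push | rewrite push_lift].
Qed.
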